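(* Let $q(m,n)=am^2+bmn+cn^2$ with $a,b,c\in\mathbb{Z}$ be a positive definite form ($\Delta=b^2-4ac<0$, $a>0$) and let $\lambda>0$. For $k\in\mathbb{Z}$ let $A_k=\{(m,n)\in(\mathbb{Z}\setminus\{0\})\times\mathbb{Z}: q(m,n)=k\}$. Then there is a constant $C_{\lambda,\Delta}$ depending only on $\lambda$ and $\Delta$ such that for every $k\in\mathbb{Z}$, $$\sum_{(m,n)\in A_k}\frac{1}{|m|^{\lambda}}\le C_{\lambda,\Delta}.$$ *)

From Stdlib Require Import Reals ZArith List.
Open Scope R_scope.

Definition qform (a b c m n : Z) : Z := (a*m*m + b*m*n + c*n*n)%Z.

Definition inA (a b c k : Z) (p : Z * Z) : Prop :=
  fst p <> 0%Z /\ qform a b c (fst p) (snd p) = k.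

Definition term (lam : R) (p : Z * Z) : R := / Rpower (Rabs (IZR (fst p))) lam.

Definition sum_terms (lam : R) (l : list (Z * Z)) : R :=
  fold_right (fun p acc => term lam p + acc) 0 l.

(* Completing the square gives [4 c q(m, n) = (2 c n + b m)^2 + D m^2] with
   [D = -Delta], so it suffices to bound [sum |m|^(-lam)] over the representations
   [N = s^2 + D m^2], [m <> 0], uniformly in [N].  Representations with
   [16 D^2 m^4 <= N] share [m^2] and [s^2], so there are at most four of them, each
   contributing at most 1; every other one contributes at most [(16 D^2 / N)^(lam/4)].
   There are [O_D(d(N)^3)] representations, [d] the divisor function: dividing out
   [gcd(m, s)] costs a factor [d(N)], and a primitive [v] is determined up to
   [2 (8 D + 1)] choices by the gcds of [N] with the two coordinates of
   [conj(v0) * v], for a fixed primitive [v0], because two primitive [u], [v] with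
   the same gcds satisfy [N | 4 D cross(u, v)].  As [d(N) = O_eps(N^eps)], the
   choice [eps = lam / 12] makes the total bounded. *)

From Stdlib Require Import Reals ZArith List Znumtheory Lia Lra.
From mathcomp Require ssreflect ssrfun ssrbool eqtype ssrnat seq path div prime bigop.

Lemma ln_le x y : (0 < x -> x <= y -> ln x <= ln y)%R.
Proof. intros hx [h| ->]; [left; apply ln_increasing|right]; auto. Qed.

Lemma exp_le x y : (x <= y -> exp x <= exp y)%R.
Proof. intros [h| ->]; [left; apply exp_increasing, h|right; reflexivity]. Qed.

(** * The divisor bound *)

Module DivisorCount.
Import mathcomp.boot.ssreflect mathcomp.boot.ssrfun mathcomp.boot.ssrbool.
Import mathcomp.boot.eqtype mathcomp.boot.ssrnat mathcomp.boot.seq mathcomp.boot.path.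
Import mathcomp.boot.div mathcomp.boot.prime mathcomp.boot.bigop.
Local Open Scope nat_scope.

Lemma size_divisors n : size (divisors n) = (\prod_(f <- prime_decomp n) f.2.+1)%N.
Proof.
rewrite /divisors; elim: (prime_decomp n) => [|[p e] pd IH]; first by rewrite big_nil.
rewrite big_cons /= -IH; elim: e => [|e IHe] /=; first by rewrite mul1n.
by rewrite size_merge size_cat size_map IHe mulSn addnC.
Qed.

Lemma INR_muln m n : INR (m * n) = (INR m * INR n)%R.
Proof. by rewrite -multE mult_INR. Qed.

Lemma INR_expn p e : INR (p ^ e) = (INR p ^ e)%R.
Proof. by elim: e => [|e IH] //; rewrite expnS INR_muln IH. Qed.

Lemma Rpower_expn_ge eps p e : (0 < INR p)%R ->
  (1 + INR e * (eps * ln (INR p)) <= Rpower (INR (p ^ e)) eps)%R.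
Proof.
move=> hp; rewrite INR_expn /Rpower ln_pow //.
have -> : (eps * (INR e * ln (INR p)) = INR e * (eps * ln (INR p)))%R by ring.
exact: exp_ineq1_le.
Qed.

Lemma succ_le_Rpower_prime_power eps p e : (0 < eps)%R -> prime p ->
  (INR e.+1 <= (1 + / (eps * ln 2)) * Rpower (INR (p ^ e)) eps)%R.
Proof.
move=> he /prime_gt1 /ltP hp; have hp2 : (2 <= INR p)%R by apply: (le_INR 2).
have hl2 : (0 < ln 2)%R by rewrite -ln_1; apply: ln_increasing; lra.
have hlp : (eps * ln 2 <= eps * ln (INR p))%R
  by apply: Rmult_le_compat_l; [lra | apply: ln_le; lra].
have hinv : (0 < / (eps * ln 2))%R by apply/Rinv_0_lt_compat/Rmult_lt_0_compat.
have hge := Rpower_expn_ge eps p e ltac:(lra).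
have he0 := pos_INR e.
have hx : (INR e <= / (eps * ln 2) * (INR e * (eps * ln (INR p))))%R.
  rewrite -[X in (X <= _)%R](Rmult_1_l (INR e)) -(Rinv_l (eps * ln 2)); last nra.
  by rewrite Rmult_assoc; apply: Rmult_le_compat_l; nra.
rewrite S_INR; nra.
Qed.

Lemma succ_le_Rpower_large_prime_power eps p e : (0 < eps)%R ->
  (exp (/ eps) <= INR p)%R -> (INR e.+1 <= Rpower (INR (p ^ e)) eps)%R.
Proof.
move=> he hp; have hp0 : (0 < INR p)%R by have := exp_pos (/ eps); lra.
have hlp : (1 <= eps * ln (INR p))%R.
  rewrite -(Rinv_r eps); last lra.
  by apply: Rmult_le_compat_l; [lra | rewrite -{1}(ln_exp (/ eps)); apply: ln_le => //; apply: exp_pos].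
have := Rpower_expn_ge eps p e hp0; have := pos_INR e; rewrite S_INR; nra.
Qed.

Lemma count_small_prime_factors P0 n :
  (count (fun f => f.1 < P0) (prime_decomp n) <= P0)%N.
Proof.
rewrite -size_filter -(size_map fst) -[P0 in (_ <= P0)%N](size_iota 0 P0).
have -> : map fst [seq f <- prime_decomp n | f.1 < P0] = [seq p <- primes n | p < P0]
  by rewrite filter_map.
apply: uniq_leq_size; first by rewrite filter_uniq // primes_uniq.
by move=> x; rewrite mem_filter mem_iota => /andP[h _]; rewrite add0n h.
Qed.

Lemma prod_succ_exponents_le (eps B : R) (P0 : nat) (s : seq (nat * nat)) :
  (forall p e, prime p -> (INR e.+1 <= B * Rpower (INR (p ^ e)) eps)%R) ->
  (forall p e, P0 <= p -> (INR e.+1 <= Rpower (INR (p ^ e)) eps)%R) ->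
  all (fun f => prime f.1) s ->
  (INR (\prod_(f <- s) f.2.+1) <=
   B ^ count (fun f => (f.1 < P0)%N) s * Rpower (INR (\prod_(f <- s) f.1 ^ f.2)) eps)%R.
Proof.
move=> Hsmall Hlarge; elim: s => [|[p e] s IH] /= hall.
  by rewrite !big_nil /= /Rpower ln_1 Rmult_0_r exp_0; lra.
have /andP[hp hs] := hall; have {}IH := IH hs.
rewrite !big_cons [(p, e).1]/= [(p, e).2]/= !INR_muln.
have hpe : (0 < INR (p ^ e))%R by apply/lt_0_INR/ltP; rewrite expn_gt0 prime_gt0.
have hprod : (0 < INR (\prod_(f <- s) f.1 ^ f.2))%R.
  apply/lt_0_INR/ltP; rewrite big_seq prodn_cond_gt0 // => -[q k] /(allP hs) /prime_gt0 q0.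
  by rewrite expn_gt0 q0.
rewrite -Rpower_mult_distr //.
have h0 := pos_INR e.+1; have h0' := pos_INR (\prod_(f <- s) f.2.+1).
case: ltnP => hP0; rewrite [X in (B ^ X)%R]/= ?add1n ?add0n.
- apply: Rle_trans (Rmult_le_compat _ _ _ _ h0 h0' (Hsmall p e hp) IH) _.
  by right; rewrite -tech_pow_Rmult; ring.
- apply: Rle_trans (Rmult_le_compat _ _ _ _ h0 h0' (Hlarge p e hP0) IH) _.
  by right; ring.
Qed.

Lemma size_divisors_le eps : (0 < eps)%R -> exists C, (0 < C)%R /\
  forall n, 0 < n -> (INR (size (divisors n)) <= C * Rpower (INR n) eps)%R.
Proof.
move=> he; set B := (1 + / (eps * ln 2))%R.
have hB : (1 <= B)%R.
  have hl2 : (0 < ln 2)%R by rewrite -ln_1; apply: ln_increasing; lra.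
  by rewrite /B; have := Rinv_0_lt_compat _ (Rmult_lt_0_compat _ _ he hl2); lra.
have [P0 HP0] : exists P0, (exp (/ eps) <= INR P0)%R.
  have [Hup _] := archimed (exp (/ eps)); exists (Z.to_nat (up (exp (/ eps)))).
  rewrite INR_IZR_INZ Z2Nat.id; first lra.
  by apply: le_IZR; have := exp_pos (/ eps); lra.
exists (B ^ P0)%R; split; first by apply: pow_lt; lra.
move=> n hn; rewrite size_divisors {2}(prod_prime_decomp hn).
apply: Rle_trans (prod_succ_exponents_le eps B P0 _ _ _ _) _.
- by move=> p e; apply: succ_le_Rpower_prime_power.
- move=> p e hp; apply: succ_le_Rpower_large_prime_power => //.
  by apply: Rle_trans HP0 _; apply/le_INR/leP.
- by apply/allP => -[p e] /mem_prime_decomp [].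
- apply: Rmult_le_compat_r; first by left; apply: exp_pos.
  by apply: Rle_pow => //; apply/leP; apply: count_small_prime_factors.
Qed.

Lemma In_seq_mem (s : seq nat) x : List.In x s <-> x \in s.
Proof.
elim: s => [|y s IH] //=; rewrite in_cons; split.
- by case=> [->|/IH ->]; rewrite ?eqxx ?orbT.
- by case/orP => [/eqP ->|/IH]; [left | right].
Qed.

Definition Zdivisors (N : Z) : list Z := List.map Z.of_nat (divisors (Z.to_nat N)).

Lemma In_Zdivisors N d : (0 < N)%Z -> List.In d (Zdivisors N) <-> (0 < d)%Z /\ (d | N)%Z.
Proof.
move=> hN; rewrite /Zdivisors List.in_map_iff.
have hn : 0 < Z.to_nat N by apply/ltP; lia.
split.
- move=> [x [<- /In_seq_mem]]; rewrite -dvdn_divisors // => /dvdnP [k hk].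
  have hx : x <> 0 by move=> hx0; move: hn; rewrite hk hx0 muln0.
  split; first lia.
  exists (Z.of_nat k); rewrite -(Z2Nat.id N); last lia.
  by rewrite hk -multE Nat2Z.inj_mul.
- move=> [hd [k hk]]; exists (Z.to_nat d); split; first lia.
  apply/In_seq_mem; rewrite -dvdn_divisors //; apply/dvdnP; exists (Z.to_nat k).
  by rewrite hk -multE -Z2Nat.inj_mul; nia.
Qed.

Lemma NoDup_Zdivisors N : List.NoDup (Zdivisors N).
Proof.
rewrite /Zdivisors; apply: List.NoDup_map_NoDup_ForallPairs; first by move=> x y _ _; lia.
elim: (divisors _) (divisors_uniq (Z.to_nat N)) => [|y s IH] /=; first by constructor.
by case/andP => ny us; constructor; [rewrite In_seq_mem; apply/negP | apply: IH].
Qed.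

Lemma length_Zdivisors_le eps : (0 < eps)%R -> exists C, (0 < C)%R /\
  forall N, (0 < N)%Z -> (INR (List.length (Zdivisors N)) <= C * Rpower (IZR N) eps)%R.
Proof.
move=> he; have [C [hC HC]] := size_divisors_le eps he; exists C; split => // N hN.
rewrite /Zdivisors List.length_map.
have -> : IZR N = INR (Z.to_nat N) by rewrite INR_IZR_INZ Z2Nat.id //; lia.
by apply: HC; apply/ltP; lia.
Qed.

End DivisorCount.

Import DivisorCount.
Open Scope Z_scope.

(** * Counting representations by [s^2 + D m^2] *)

Lemma length_le_mul_fibers {A K : Type} (dec : forall x y : K, {x = y} + {x <> y})
  (key : A -> K) (keys : list K) (B : nat) (L : list A) :
  NoDup L -> (forall x, In x L -> In (key x) keys) ->
  (forall u F, NoDup (u :: F) -> incl (u :: F) L ->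
     (forall x, In x (u :: F) -> key x = key u) -> (length (u :: F) <= B)%nat) ->
  (length L <= B * length keys)%nat.
Proof.
revert L; induction keys as [|k keys IH]; intros L HL Hkeys HB.
- destruct L as [|x L]; [simpl; lia|]. destruct (Hkeys x (or_introl eq_refl)).
- pose (f := fun x => if dec (key x) k then true else false).
  assert (Hf : forall x, In x (filter f L) <-> In x L /\ key x = k).
  { intros x. rewrite filter_In. unfold f. destruct (dec (key x) k); intuition discriminate. }
  rewrite <- (filter_length f L).
  assert (Hk : (length (filter f L) <= B)%nat).
  { destruct (filter f L) as [|u F] eqn:EF; [simpl; lia|].
    apply HB.
    - rewrite <- EF. apply NoDup_filter, HL.
    - intros x Hx. apply Hf, Hx.
    - intros x Hx. rewrite (proj2 (proj1 (Hf x) Hx)). symmetry. apply Hf. left. reflexivity. }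
  assert (Hrest : (length (filter (fun x => negb (f x)) L) <= B * length keys)%nat).
  { apply IH.
    - apply NoDup_filter, HL.
    - intros x Hx. apply filter_In in Hx as [Hx Hnf].
      destruct (Hkeys x Hx) as [E|E]; [|exact E].
      unfold f in Hnf. destruct (dec (key x) k); [discriminate|congruence].
    - intros u F HF Hincl Hkey. apply HB; [exact HF| |exact Hkey].
      intros x Hx. apply Hincl in Hx. apply filter_In in Hx. apply Hx. }
  simpl. lia.
Qed.

Lemma NoDup_length_le_inj {A B : Type} (f : A -> B) (L : list A) (M : list B) :
  NoDup L -> (forall x, In x L -> In (f x) M) ->
  (forall x y, In x L -> In y L -> f x = f y -> x = y) -> (length L <= length M)%nat.
Proof.
intros HN HM HI. rewrite <- (length_map f L). apply NoDup_incl_length.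
- apply NoDup_map_NoDup_ForallPairs; assumption.
- intros y Hy. apply in_map_iff in Hy as [x [<- Hx]]. auto.
Qed.

Definition Zrange (a : Z) (n : nat) : list Z := map (fun i => a + Z.of_nat i) (seq 0 n).

Lemma In_Zrange a n x : a <= x < a + Z.of_nat n -> In x (Zrange a n).
Proof.
intros Hx. apply in_map_iff. exists (Z.to_nat (x - a)). split.
- rewrite Z2Nat.id; lia.
- apply in_seq. lia.
Qed.

Lemma Zgcd_pos_r a N : 0 < N -> 0 < Z.gcd a N.
Proof.
intros HN. destruct (Z.eq_dec (Z.gcd a N) 0) as [E|E].
- apply Z.gcd_eq_0 in E. lia.
- generalize (Z.gcd_nonneg a N). lia.
Qed.

Lemma rel_prime_divide_l g a N : (g | N) -> rel_prime a N -> rel_prime g a.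
Proof. intros Hg Ha. apply rel_prime_div with N; [apply rel_prime_sym|]; assumption. Qed.

Lemma Zdivide_mul_gcd P Q N : (N | P * Q) -> (N | Z.gcd P N * Z.gcd Q N).
Proof.
intros HPQ. rewrite <- Z.gcd_mul_mono_r_nonneg by apply Z.gcd_nonneg.
apply Zdivide_Zgcd; [|apply Z.divide_factor_l].
apply Z.divide_abs_r. rewrite Z.abs_mul, (Z.abs_eq (Z.gcd Q N)) by apply Z.gcd_nonneg.
rewrite <- Z.gcd_mul_mono_l. apply Zdivide_Zgcd; [exact HPQ|apply Z.divide_factor_r].
Qed.

Lemma Zmul_divide_gcd_mul g1 g2 W : (g1 | W) -> (g2 | W) -> (g1 * g2 | Z.gcd g1 g2 * W).
Proof.
intros H1 H2. apply Z.divide_abs_r.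
rewrite Z.abs_mul, (Z.abs_eq (Z.gcd g1 g2)) by apply Z.gcd_nonneg.
rewrite <- Z.gcd_mul_mono_r. apply Zdivide_Zgcd.
- apply Z.mul_divide_mono_l. exact H2.
- rewrite (Z.mul_comm g2). apply Z.mul_divide_mono_r. exact H1.
Qed.

(* A pair [(m, s)] stands for [s + m sqrt(-D)]: [normD D] is its norm, and
   [dotD D u v], [cross u v] are the two coordinates of [conj(u) * v]. *)
Definition normD (D : Z) (v : Z * Z) : Z := snd v * snd v + D * fst v * fst v.
Definition dotD (D : Z) (u v : Z * Z) : Z := snd u * snd v + D * fst u * fst v.
Definition cross (u v : Z * Z) : Z := snd u * fst v - snd v * fst u.
Definition zconj (v : Z * Z) : Z * Z := (- fst v, snd v).

Lemma normD_dot_cross D u v :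
  dotD D u v * dotD D u v + D * cross u v * cross u v = normD D u * normD D v.
Proof. unfold dotD, cross, normD. ring. Qed.

Lemma cross_dot_inj D u v v' : normD D u <> 0 ->
  cross u v = cross u v' -> dotD D u v = dotD D u v' -> v = v'.
Proof.
destruct u as [mu su], v as [m s], v' as [m' s']; unfold normD, cross, dotD; simpl.
intros HN Hc Hd.
assert (Es : normD D (mu, su) * s = normD D (mu, su) * s').
{ unfold normD; simpl.
  replace ((su * su + D * mu * mu) * s) with (su * (su * s + D * mu * m) - D * mu * (su * m - s * mu)) by ring.
  rewrite Hc, Hd. ring. }
assert (Em : normD D (mu, su) * m = normD D (mu, su) * m').
{ unfold normD; simpl.
  replace ((su * su + D * mu * mu) * m) with (mu * (su * s + D * mu * m) + su * (su * m - s * mu)) by ring.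
  rewrite Hc, Hd. ring. }
apply Z.mul_reg_l in Es; [|exact HN]. apply Z.mul_reg_l in Em; [|exact HN]. subst. reflexivity.
Qed.

Lemma rel_prime_normD D v : rel_prime (fst v) (snd v) -> rel_prime (fst v) (normD D v).
Proof.
destruct v as [m s]; unfold normD; simpl; intros Hms.
apply Zgcd_1_rel_prime.
replace (s * s + D * m * m) with (s * s + (D * m) * m) by ring.
rewrite Z.gcd_add_mult_diag_r. apply Zgcd_1_rel_prime, rel_prime_mult; exact Hms.
Qed.

Lemma divide_cross g w u v : rel_prime g (fst w) ->
  (g | cross w u) -> (g | cross w v) -> (g | cross u v).
Proof.
intros Hg Hu Hv. apply Gauss with (fst w); [|exact Hg].
replace (fst w * cross u v) with (fst u * cross w v - fst v * cross w u)
  by (unfold cross; ring).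
apply Z.divide_sub_r; apply Z.divide_mul_r; assumption.
Qed.

Section KeyDivide.
Variables (D N : Z) (v0 u v : Z * Z).
Hypotheses (Hv0 : normD D v0 = N) (Hu : normD D u = N).
Hypotheses (Pv0 : rel_prime (fst v0) (snd v0)) (Pu : rel_prime (fst u) (snd u)).

Let g1 := Z.gcd (cross v0 u) N.
Let g2 := Z.gcd (cross (zconj v0) u) N.

Lemma rel_prime_fst_v0 g : (g | N) -> rel_prime g (fst v0).
Proof. intros Hg. apply rel_prime_divide_l with N; [exact Hg|]. rewrite <- Hv0. apply rel_prime_normD, Pv0. Qed.

Lemma divide_mul_key_gcds : (N | g1 * g2).
Proof.
apply Zdivide_mul_gcd. exists (fst u * fst u - fst v0 * fst v0).
transitivity (normD D v0 * (fst u * fst u) - normD D u * (fst v0 * fst v0));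
  [unfold cross, zconj, normD; cbn [fst snd]; ring | rewrite Hv0, Hu; ring].
Qed.

(* [cross (zconj v0) u - cross v0 u = 2 (snd u) (fst v0)] and
   [4 D (fst u)^2 = 4 N - (2 snd u)^2], with [fst v0], [fst u] prime to [N]. *)
Lemma gcd_key_gcds_divide : (Z.gcd g1 g2 | 4 * D).
Proof.
set (h := Z.gcd g1 g2).
assert (hN : (h | N)) by (apply Z.divide_trans with g1; [apply Z.gcd_divide_l|apply Z.gcd_divide_r]).
assert (hs : (h | 2 * snd u)).
{ apply Gauss with (fst v0); [|apply rel_prime_fst_v0, hN].
  replace (fst v0 * (2 * snd u)) with (cross (zconj v0) u - cross v0 u)
    by (unfold cross, zconj; cbn [fst snd]; ring).
  apply Z.divide_sub_r.
  - apply Z.divide_trans with g2; [apply Z.gcd_divide_r|apply Z.gcd_divide_l].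
  - apply Z.divide_trans with g1; [apply Z.gcd_divide_l|apply Z.gcd_divide_l]. }
apply Gauss with (fst u * fst u).
- replace (fst u * fst u * (4 * D)) with (4 * N - (2 * snd u) * (2 * snd u))
    by (rewrite <- Hu; unfold normD; ring).
  apply Z.divide_sub_r; [apply Z.divide_mul_r, hN|apply Z.divide_mul_l, hs].
- assert (Hh : rel_prime h (fst u)).
  { apply rel_prime_divide_l with N; [exact hN|]. rewrite <- Hu. apply rel_prime_normD, Pu. }
  apply rel_prime_mult; exact Hh.
Qed.

Lemma key_divide : Z.gcd (cross v0 v) N = g1 -> Z.gcd (cross (zconj v0) v) N = g2 ->
  (N | 4 * D * cross u v).
Proof.
intros E1 E2.
assert (W1 : (g1 | cross u v)).
{ apply divide_cross with v0; [apply rel_prime_fst_v0, Z.gcd_divide_r|apply Z.gcd_divide_l|].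
  rewrite <- E1. apply Z.gcd_divide_l. }
assert (W2 : (g2 | cross u v)).
{ apply divide_cross with (zconj v0); [|apply Z.gcd_divide_l|rewrite <- E2; apply Z.gcd_divide_l].
  apply Zgcd_1_rel_prime. simpl. rewrite Z.gcd_opp_r.
  apply Zgcd_1_rel_prime, rel_prime_fst_v0, Z.gcd_divide_r. }
apply Z.divide_trans with (g1 * g2); [exact divide_mul_key_gcds|].
apply Z.divide_trans with (Z.gcd g1 g2 * cross u v); [apply Zmul_divide_gcd_mul; assumption|].
apply Z.mul_divide_mono_r, gcd_key_gcds_divide.
Qed.

End KeyDivide.

Lemma sq_sign_inj x y : x * x = y * y -> (0 <=? x) = (0 <=? y) -> x = y.
Proof. intros Hsq Hs. destruct (Z.leb_spec 0 x), (Z.leb_spec 0 y); try discriminate; nia. Qed.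

Lemma fiber_length_le D N u F : 0 < D -> 0 < N -> normD D u = N -> NoDup F ->
  (forall v, In v F -> normD D v = N /\ (N | 4 * D * cross u v)) ->
  (length F <= Z.to_nat (8 * D + 1) * 2)%nat.
Proof.
intros HD HN Hu HF HV.
set (f := fun v => (4 * D * cross u v / N, 0 <=? dotD D u v)).
assert (Hf : forall v, In v F -> fst (f v) * N = 4 * D * cross u v /\
   dotD D u v * dotD D u v + D * cross u v * cross u v = N * N).
{ intros v Hv. destruct (HV v Hv) as [Hn [k Hk]]. split.
  - unfold f; cbn [fst]. rewrite Hk, Z.div_mul; lia.
  - rewrite normD_dot_cross, Hu, Hn. reflexivity. }
replace (Z.to_nat (8 * D + 1) * 2)%nat
  with (length (list_prod (Zrange (- 4 * D) (Z.to_nat (8 * D + 1))) (true :: false :: nil)))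
  by (rewrite length_prod; unfold Zrange; rewrite length_map, length_seq; reflexivity).
apply (NoDup_length_le_inj f); [exact HF| |].
- intros v Hv. destruct (Hf v Hv) as [Hj Hn].
  destruct (f v) as [j b]; cbn [fst] in Hj. apply in_prod_iff. split.
  + apply In_Zrange. rewrite Z2Nat.id by lia.
    set (W := cross u v) in *.
    assert (HW : D * W * W <= N * N) by nia.
    assert (Hjj : j * j * (N * N) <= 16 * D * (N * N)).
    { replace (j * j * (N * N)) with (16 * D * (D * W * W))
        by (transitivity ((j * N) * (j * N)); [rewrite Hj|]; ring).
      apply Z.mul_le_mono_nonneg_l; lia. }
    apply Z.mul_le_mono_pos_r in Hjj; [|nia].
    assert (j <= 4 * D /\ - j <= 4 * D) by (split; nia).
    lia.
  + destruct b; simpl; auto.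
- intros v v' Hv Hv' Hfv.
  destruct (Hf v Hv) as [Hj Hn], (Hf v' Hv') as [Hj' Hn'].
  assert (Hc : cross u v = cross u v') by (rewrite Hfv in Hj; nia).
  apply (cross_dot_inj D u); [lia|exact Hc|].
  apply sq_sign_inj; [rewrite Hc in Hn; lia|].
  exact (f_equal snd Hfv).
Qed.

Definition Zpair_eq_dec : forall x y : Z * Z, {x = y} + {x <> y}.
Proof. decide equality; apply Z.eq_dec. Defined.

Lemma primitive_reps_length_le D N L : 0 < D -> 0 < N -> NoDup L ->
  (forall v, In v L -> normD D v = N /\ rel_prime (fst v) (snd v)) ->
  (length L <= Z.to_nat (8 * D + 1) * 2 * (length (Zdivisors N) * length (Zdivisors N)))%nat.
Proof.
intros HD HN HL HP.
destruct L as [|v0 L0] eqn:EL; [simpl; lia|]. rewrite <- EL in *.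
destruct (HP v0 ltac:(rewrite EL; left; reflexivity)) as [Hv0 Pv0].
set (key := fun v => (Z.gcd (cross v0 v) N, Z.gcd (cross (zconj v0) v) N)).
rewrite <- length_prod. apply (length_le_mul_fibers Zpair_eq_dec key); [exact HL| |].
- intros x _. apply in_prod_iff. split; apply In_Zdivisors; try exact HN;
    split; [apply Zgcd_pos_r, HN|apply Z.gcd_divide_r|apply Zgcd_pos_r, HN|apply Z.gcd_divide_r].
- intros u F HF Hincl Hkey.
  destruct (HP u (Hincl u (or_introl eq_refl))) as [Hu Pu].
  apply fiber_length_le with N u; try assumption.
  intros v Hv. split; [apply HP, Hincl, Hv|].
  injection (Hkey v Hv) as E1 E2. apply key_divide with v0; assumption.
Qed.

Lemma length_Zdivisors_divide N N' : 0 < N -> 0 < N' -> (N' | N) ->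
  (length (Zdivisors N') <= length (Zdivisors N))%nat.
Proof.
intros HN HN' Hd. apply NoDup_incl_length; [apply NoDup_Zdivisors|].
intros x Hx. apply In_Zdivisors in Hx as [Hx1 Hx2]; [|exact HN'].
apply In_Zdivisors; [exact HN|]. split; [exact Hx1|]. apply Z.divide_trans with N'; assumption.
Qed.

Lemma Zgcd_pos_normD D N v : 0 < N -> normD D v = N -> 0 < Z.gcd (fst v) (snd v).
Proof.
intros HN Hv. destruct (Z.eq_dec (Z.gcd (fst v) (snd v)) 0) as [E|E].
- apply Z.gcd_eq_0 in E as [E1 E2]. unfold normD in Hv. rewrite E1, E2 in Hv. lia.
- generalize (Z.gcd_nonneg (fst v) (snd v)). lia.
Qed.

Lemma primitive_part D v g : g = Z.gcd (fst v) (snd v) -> 0 < g ->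
  v = (g * (fst v / g), g * (snd v / g)) /\ rel_prime (fst v / g) (snd v / g) /\
  normD D v = g * g * normD D (fst v / g, snd v / g).
Proof.
destruct v as [m s]; cbn [fst snd]; intros Eg Hg.
assert (Em : m = g * (m / g)).
{ apply Z.div_exact; [lia|]. apply Z.mod_divide; [lia|]. rewrite Eg. apply Z.gcd_divide_l. }
assert (Es : s = g * (s / g)).
{ apply Z.div_exact; [lia|]. apply Z.mod_divide; [lia|]. rewrite Eg. apply Z.gcd_divide_r. }
split; [rewrite <- Em, <- Es; reflexivity|]. split.
- apply Zgcd_1_rel_prime, Z.gcd_div_gcd; [lia|exact Eg].
- unfold normD; cbn [fst snd]. remember (m / g) as a. remember (s / g) as b. rewrite Em, Es. ring.
Qed.

Lemma reps_fixed_gcd_length_le D N g F : 0 < D -> 0 < N -> 0 < g -> (g * g | N) -> NoDup F ->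
  (forall v, In v F -> normD D v = N /\ Z.gcd (fst v) (snd v) = g) ->
  (length F <= Z.to_nat (8 * D + 1) * 2 * (length (Zdivisors N) * length (Zdivisors N)))%nat.
Proof.
intros HD HN Hg [N' EN'] HF HV.
assert (HN' : 0 < N') by nia.
set (nu := fun v : Z * Z => (fst v / g, snd v / g)).
assert (Hnu : forall v, In v F -> v = (g * fst (nu v), g * snd (nu v)) /\
                rel_prime (fst (nu v)) (snd (nu v)) /\ normD D (nu v) = N').
{ intros v Hv. destruct (HV v Hv) as [Hn Hgv].
  destruct (primitive_part D v g (eq_sym Hgv) Hg) as [Ev [Hp En]].
  split; [exact Ev|]. split; [exact Hp|].
  apply Z.mul_reg_r with (g * g); [lia|]. unfold nu.
  rewrite (Z.mul_comm (normD _ _)), <- En, Hn, EN'. reflexivity. }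
rewrite <- (length_map nu F).
eapply Nat.le_trans; [apply (primitive_reps_length_le D N'); try assumption|].
- apply NoDup_map_NoDup_ForallPairs; [|exact HF].
  intros x y Hx Hy Exy. rewrite (proj1 (Hnu x Hx)), (proj1 (Hnu y Hy)), Exy. reflexivity.
- intros w Hw. apply in_map_iff in Hw as [v [<- Hv]].
  destruct (Hnu v Hv) as [_ [Hp En]]. split; assumption.
- assert (Hle : (length (Zdivisors N') <= length (Zdivisors N))%nat).
  { apply length_Zdivisors_divide; [exact HN|exact HN'|]. exists (g * g). rewrite EN'. ring. }
  apply Nat.mul_le_mono_l, Nat.mul_le_mono; exact Hle.
Qed.

Lemma reps_length_le D N L : 0 < D -> 0 < N -> NoDup L -> (forall v, In v L -> normD D v = N) ->
  (length L <= Z.to_nat (8 * D + 1) * 2 * (length (Zdivisors N) * length (Zdivisors N))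
                * length (Zdivisors N))%nat.
Proof.
intros HD HN HL HR.
set (key := fun v : Z * Z => Z.gcd (fst v) (snd v)).
apply (length_le_mul_fibers Z.eq_dec key); [exact HL| |].
- intros v Hv. apply In_Zdivisors; [exact HN|].
  split; [apply Zgcd_pos_normD with D N; [exact HN|apply HR, Hv]|].
  rewrite <- (HR v Hv). unfold normD. apply Z.divide_add_r.
  + apply Z.divide_mul_l, Z.gcd_divide_r.
  + apply Z.divide_mul_r, Z.gcd_divide_l.
- intros u F HF Hincl Hkey.
  assert (Hu : normD D u = N) by apply HR, Hincl, in_eq.
  assert (Hg : 0 < key u) by (apply Zgcd_pos_normD with D N; assumption).
  apply reps_fixed_gcd_length_le with (key u); try assumption.
  + destruct (primitive_part D u (key u) eq_refl Hg) as [_ [_ En]].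
    exists (normD D (fst u / key u, snd u / key u)). rewrite <- Hu, En. ring.
  + intros v Hv. split; [apply HR, Hincl, Hv|apply Hkey, Hv].
Qed.

(** * The sum over representations *)

(* If [A < A1] then [|s| > |s1|], so [A1 - A = s^2 - s1^2 >= |s|]; hence
   [N - A = s^2 <= A1^2 <= N / 16], contradicting [A <= sqrt N / 4]. *)
Lemma sq_add_eq s s1 A A1 N : 0 <= A -> 0 <= A1 -> s * s + A = N -> s1 * s1 + A1 = N ->
  16 * A * A <= N -> 16 * A1 * A1 <= N -> A = A1.
Proof.
assert (Hlt : forall s s1 A A1, 0 <= A -> 0 <= A1 -> s * s + A = N -> s1 * s1 + A1 = N ->
  16 * A * A <= N -> 16 * A1 * A1 <= N -> ~ A < A1).
{ intros s' s1' B B1 H0 H1 E E1 S S1 Hlt.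
  set (a := Z.abs s'). set (b := Z.abs s1').
  assert (Ea : a * a = s' * s') by (unfold a; nia).
  assert (Eb : b * b = s1' * s1') by (unfold b; nia).
  assert (Ha : 0 <= a) by (unfold a; lia). assert (Hb : 0 <= b) by (unfold b; lia).
  assert (Hab : b < a) by nia.
  assert (G : a <= B1 - B) by nia.
  assert (G2 : a * a <= (B1 - B) * (B1 - B)) by nia.
  assert (G3 : (B1 - B) * (B1 - B) <= B1 * B1) by nia.
  assert (G4 : 15 * N <= 16 * B) by nia.
  destruct (Z.eq_dec B 0) as [->|HB]; nia. }
intros H0 H1 E E1 S S1.
destruct (Z.lt_total A A1) as [h|[h|h]]; [exfalso|exact h|exfalso].
- exact (Hlt s s1 A A1 H0 H1 E E1 S S1 h).
- exact (Hlt s1 s A1 A H1 H0 E1 E S1 S h).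
Qed.

Definition small_rep (D N : Z) (v : Z * Z) : bool :=
  16 * D * D * (fst v * fst v) * (fst v * fst v) <=? N.

Lemma small_reps_length_le D N L : 0 < D -> NoDup L -> (forall v, In v L -> normD D v = N) ->
  (length (filter (small_rep D N) L) <= 4)%nat.
Proof.
intros HD HL HR.
assert (HF : NoDup (filter (small_rep D N) L)) by apply NoDup_filter, HL.
assert (Hin : forall x, In x (filter (small_rep D N) L) -> normD D x = N /\ small_rep D N x = true).
{ intros x Hx. apply filter_In in Hx as [Hx Hs]. auto. }
destruct (filter (small_rep D N) L) as [|[m1 s1] rest] eqn:EF; [simpl; lia|].
change 4%nat with (length ((m1, s1) :: (m1, -s1) :: (-m1, s1) :: (-m1, -s1) :: nil)).
apply NoDup_incl_length; [exact HF|].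
intros [m s] Hv.
destruct (Hin _ Hv) as [Rv Sv], (Hin (m1, s1) (or_introl eq_refl)) as [R1 S1].
unfold normD, small_rep in *; cbn [fst snd] in *. apply Z.leb_le in Sv, S1.
assert (EA : D * m * m = D * m1 * m1) by (apply sq_add_eq with s s1 N; nia).
assert (Em : m * m = m1 * m1) by nia.
assert (Es : s * s = s1 * s1) by nia.
assert (Em' : m = m1 \/ m = - m1) by nia.
assert (Es' : s = s1 \/ s = - s1) by nia.
destruct Em' as [-> | ->], Es' as [-> | ->]; simpl; tauto.
Qed.

Open Scope R_scope.

Lemma Rabs_IZR_ge_1 m : (m <> 0)%Z -> 1 <= Rabs (IZR m).
Proof. intros H. rewrite <- abs_IZR. apply IZR_le. lia. Qed.

Lemma term_le_1 lam p : 0 < lam -> (fst p <> 0)%Z -> term lam p <= 1.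
Proof.
intros hl hm. unfold term. set (x := Rabs (IZR (fst p))).
assert (hx : 1 <= x) by apply Rabs_IZR_ge_1, hm.
assert (hR : 1 <= Rpower x lam).
{ unfold Rpower. assert (0 <= ln x) by (rewrite <- ln_1; apply ln_le; lra).
  generalize (exp_ineq1_le (lam * ln x)). nra. }
rewrite <- Rinv_1. apply Rinv_le_contravar; lra.
Qed.

Lemma term_le_Rpower lam A N p : 0 < lam -> 0 < IZR N -> (fst p <> 0)%Z ->
  (N < A * (fst p * fst p) * (fst p * fst p))%Z ->
  term lam p <= Rpower (IZR A / IZR N) (lam / 4).
Proof.
intros hl hN hm hlt. unfold term, Rpower.
set (a := IZR (fst p)). set (x := Rabs a).
assert (hx : 1 <= x) by apply Rabs_IZR_ge_1, hm.
assert (hxx : x * x = a * a) by (unfold x; rewrite <- Rabs_mult; apply Rabs_pos_eq; nra).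
assert (hlt' : IZR N < IZR A * ((x * x) * (x * x))).
{ rewrite hxx. unfold a. rewrite <- !mult_IZR. apply IZR_lt. lia. }
assert (hA : 0 < IZR A).
{ assert (hx2 : 1 <= x * x) by nra.
  assert (hy : 1 <= (x * x) * (x * x)) by nra.
  destruct (Rle_or_lt (IZR A) 0) as [h|h]; [|exact h].
  assert (IZR A * ((x * x) * (x * x)) <= 0) by nra. lra. }
rewrite <- exp_Ropp. apply exp_le.
unfold Rdiv. rewrite ln_mult, ln_Rinv by (try apply Rinv_0_lt_compat; assumption).
assert (hln : ln (IZR N) < ln (IZR A) + (ln x + ln x + ln x + ln x)).
{ rewrite <- !ln_mult by (repeat apply Rmult_lt_0_compat; lra).
  apply ln_increasing; [lra|]. replace (IZR A * (x * x * x * x)) with (IZR A * ((x * x) * (x * x))) by ring.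
  exact hlt'. }
nra.
Qed.

Lemma sum_terms_le_split lam (P : Z * Z -> bool) M L : 0 < lam -> 0 <= M ->
  (forall p, In p L -> (fst p <> 0)%Z) -> (forall p, In p L -> P p = false -> term lam p <= M) ->
  sum_terms lam L <= INR (length (filter P L)) + INR (length L) * M.
Proof.
intros hl hM H0 H1. induction L as [|p L IH]; [simpl; lra|].
change (sum_terms lam (p :: L)) with (term lam p + sum_terms lam L).
cbn [length filter]. rewrite S_INR.
assert (IH' : sum_terms lam L <= INR (length (filter P L)) + INR (length L) * M).
{ apply IH; intros q hq; [apply H0|apply H1]; right; exact hq. }
assert (t1 := term_le_1 lam p hl (H0 p (or_introl eq_refl))).
destruct (P p) eqn:Es.
- cbn [length]. rewrite S_INR. nra.
- assert (t2 := H1 p (or_introl eq_refl) Es). nra.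
Qed.

Lemma sum_terms_reps_le lam D : 0 < lam -> (0 < D)%Z -> exists C, forall N L, NoDup L ->
  (forall v, In v L -> normD D v = N /\ (fst v <> 0)%Z) -> sum_terms lam L <= C.
Proof.
intros hl hD.
set (eps := lam / 12).
destruct (length_Zdivisors_le eps ltac:(unfold eps; lra)) as [B [hB HB]].
set (K := (Z.to_nat (8 * D + 1) * 2)%nat).
set (A := IZR (16 * D * D)).
assert (hA : 0 < A) by (apply IZR_lt; nia).
set (C0 := INR K * (B * B * B) * Rpower A (lam / 4)).
assert (hC0 : 0 <= C0).
{ assert (0 <= INR K) by apply pos_INR.
  assert (0 < Rpower A (lam / 4)) by apply exp_pos.
  unfold C0. repeat apply Rmult_le_pos; lra. }
exists (4 + C0). intros N L HL HV.
destruct L as [|v0 L0] eqn:EL; [unfold sum_terms; simpl; lra|]. rewrite <- EL in *.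
assert (hN : (0 < N)%Z).
{ destruct (HV v0 ltac:(rewrite EL; left; reflexivity)) as [Hr Hm]. unfold normD in Hr. nia. }
assert (hNr : 0 < IZR N) by (apply IZR_lt; exact hN).
set (M := Rpower (A / IZR N) (lam / 4)).
assert (hM : 0 <= M) by (left; apply exp_pos).
assert (Hsplit : sum_terms lam L <= INR (length (filter (small_rep D N) L)) + INR (length L) * M).
{ apply sum_terms_le_split; [exact hl|exact hM|intros p hp; apply (HV p hp)|].
  intros p hp hs. apply term_le_Rpower; [exact hl|exact hNr|apply (HV p hp)|].
  unfold small_rep in hs. apply Z.leb_gt in hs. exact hs. }
assert (Hsmall : INR (length (filter (small_rep D N) L)) <= 4).
{ replace 4 with (INR 4) by (simpl; ring). apply le_INR.
  apply (small_reps_length_le D N L); [exact hD|exact HL|intros v hv; apply (HV v hv)]. }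
set (d := INR (length (Zdivisors N))).
assert (Hcount : INR (length L) <= INR K * (d * d * d)).
{ unfold d. rewrite <- !mult_INR. apply le_INR. unfold K.
  assert (H := reps_length_le D N L hD hN HL ltac:(intros v hv; apply (HV v hv))). lia. }
set (E := Rpower (IZR N) eps).
assert (hd0 : 0 <= d) by apply pos_INR.
assert (hE : 0 < E) by apply exp_pos.
assert (Hd : d <= B * E) by apply HB, hN.
assert (Hd3 : d * d * d <= (B * E) * (B * E) * (B * E)) by (apply Rmult_le_compat; nra).
assert (HEM : E * E * E * M = Rpower A (lam / 4)).
{ unfold E, M, Rpower. rewrite <- !exp_plus. f_equal.
  unfold Rdiv at 2. rewrite ln_mult, ln_Rinv by (try apply Rinv_0_lt_compat; assumption).
  unfold eps. field. }
assert (HLM : INR (length L) * M <= C0).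
{ apply Rle_trans with (INR K * (d * d * d) * M); [apply Rmult_le_compat_r; assumption|].
  unfold C0. rewrite <- HEM.
  replace (INR K * (B * B * B) * (E * E * E * M)) with (INR K * ((B * E) * (B * E) * (B * E)) * M) by ring.
  apply Rmult_le_compat_r; [exact hM|]. apply Rmult_le_compat_l; [apply pos_INR|exact Hd3]. }
lra.
Qed.

Lemma sum_terms_map lam (f : Z * Z -> Z * Z) l :
  (forall p, fst (f p) = fst p) -> sum_terms lam (map f l) = sum_terms lam l.
Proof.
intros Hf. induction l as [|p l IH]; [reflexivity|]. cbn [map].
change (term lam (f p) + sum_terms lam (map f l) = term lam p + sum_terms lam l).
unfold term at 1. rewrite Hf, IH. reflexivity.
Qed.

Lemma qform_complete_square a b c m n :
  (4 * c * qform a b c m n = normD (4 * a * c - b * b) (m, 2 * c * n + b * m))%Z.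
Proof. unfold qform, normD; cbn [fst snd]. ring. Qed.

Theorem mainTheorem6 :
  forall (lam : R) (Delta : Z), 0 < lam -> (Delta < 0)%Z ->
  exists C : R,
    forall a b c : Z, (0 < a)%Z -> (b*b - 4*a*c)%Z = Delta ->
    forall (k : Z) (l : list (Z * Z)),
      NoDup l -> (forall p, In p l -> inA a b c k p) ->
      sum_terms lam l <= C.
Proof.
intros lam Delta hl hDelta.
destruct (sum_terms_reps_le lam (- Delta) hl ltac:(lia)) as [C HC].
exists C. intros a b c ha hdisc k l Hl Hin.
assert (hc : (0 < c)%Z).
{ assert (0 <= b * b)%Z by apply Z.square_nonneg.
  assert (0 < a * c)%Z by (rewrite <- Z.mul_assoc in hdisc; lia).
  destruct (Z.lt_ge_cases 0 c); [assumption|nia]. }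
set (f := fun p : Z * Z => (fst p, 2 * c * snd p + b * fst p)%Z).
rewrite <- (sum_terms_map lam f l) by reflexivity.
apply (HC (4 * c * k)%Z).
- apply NoDup_map_NoDup_ForallPairs; [|exact Hl].
  intros [m n] [m' n'] _ _ Hf.
  assert (Hm : m = m') by exact (f_equal fst Hf). subst m'.
  assert (Hn : (2 * c * n + b * m = 2 * c * n' + b * m)%Z) by exact (f_equal snd Hf).
  f_equal. apply Z.mul_reg_l with (2 * c)%Z; lia.
- intros v Hv. apply in_map_iff in Hv as [[m n] [<- Hp]].
  destruct (Hin _ Hp) as [Hm Hq]. split; [|exact Hm].
  cbn [fst snd] in Hq. subst Delta k. unfold f; cbn [fst snd].
  rewrite qform_complete_square. f_equal. ring.
Qed.
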